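(* Let $K,N$ be homogeneous bi-variate means and $G(s,t)=\sqrt{st}$. If $G$ is $(K,N)$-stabilized, i.e. $G(s,t)=K\big(N(s,G(s,t)),N(G(s,t),t)\big)$ for all $s,t>0$, then $G(s,t)=N(\sqrt s,\sqrt t)\,K(\sqrt s,\sqrt t)$ for all $s,t>0$, $G$ is also $(N,K)$-stabilized, and $N(s,t)K(s,t)=st$, i.e. $G\big(N(s,t),K(s,t)\big)=G(s,t)$, for all $s,t>0$.
   Context: A bi-variate mean is $M:(0,\infty)^2\to(0,\infty)$ with $\min(s,t)\le M(s,t)\le\max(s,t)$; homogeneous means $M(\lambda s,\lambda t)=\lambda M(s,t)$ for $\lambda,s,t>0$. $M$ is $(K,N)$-stabilized if $M(s,t)=K\big(N(s,M(s,t)),N(M(s,t),t)\big)$ for all $s,t>0$. *)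

From Stdlib Require Import Reals.
Open Scope R_scope.

(* A bi-variate mean on (0,oo)^2, represented by a total function R -> R -> R
   whose values off (0,oo)^2 are irrelevant. *)
Definition is_mean (M : R -> R -> R) : Prop :=
  forall s t, 0 < s -> 0 < t ->
    0 < M s t /\ Rmin s t <= M s t /\ M s t <= Rmax s t.

Definition is_homogeneous (M : R -> R -> R) : Prop :=
  forall l s t, 0 < l -> 0 < s -> 0 < t -> M (l * s) (l * t) = l * M s t.

Definition stabilized (M K N : R -> R -> R) : Prop :=
  forall s t, 0 < s -> 0 < t -> M s t = K (N s (M s t)) (N (M s t) t).

Definition Gm (s t : R) : R := sqrt (s * t).

(* Writing s = a², t = b² (a, b > 0), homogeneity of N and then of K gives
     N(a², ab) = a N(a,b),  N(ab, b²) = b N(a,b),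
     K(a N(a,b), b N(a,b)) = N(a,b) K(a,b),
   while G(a², b²) = ab.  Hence, for any two positive homogeneous functions
   K and N, "G is (K,N)-stabilized" is equivalent to the product identity
   N(a,b) K(a,b) = ab on (0,oo)².  Since this identity is symmetric in K and
   N, G is then (N,K)-stabilized as well, and the remaining claims are
   rewritings of the product identity at (a,b) = (sqrt s, sqrt t) and at
   (a,b) = (s,t). *)
From Stdlib Require Import Reals Lra.
Open Scope R_scope.

Lemma mean_pos (M : R -> R -> R) :
  is_mean M -> forall a b, 0 < a -> 0 < b -> 0 < M a b.
Proof. intros mM a b Ha Hb. exact (proj1 (mM a b Ha Hb)). Qed.

Lemma Gm_squares (a b : R) : 0 < a -> 0 < b -> Gm (a * a) (b * b) = a * b.
Proof.
  intros Ha Hb; unfold Gm.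
  replace (a * a * (b * b)) with ((a * b) * (a * b)) by ring.
  apply sqrt_square; nra.
Qed.

Lemma sqrt_pos_square (s : R) : 0 < s -> 0 < sqrt s /\ s = sqrt s * sqrt s.
Proof.
  intros Hs; split.
  - now apply sqrt_lt_R0.
  - symmetry; apply sqrt_sqrt; lra.
Qed.

Section Composite.

Variables K N : R -> R -> R.
Hypothesis hK : is_homogeneous K.
Hypothesis hN : is_homogeneous N.
Hypothesis N_pos : forall a b, 0 < a -> 0 < b -> 0 < N a b.

Lemma composite_at_squares (a b : R) : 0 < a -> 0 < b ->
  K (N (a * a) (a * b)) (N (a * b) (b * b)) = N a b * K a b.
Proof.
  intros Ha Hb.
  rewrite (hN a a b Ha Ha Hb).
  replace (a * b) with (b * a) by ring.
  rewrite (hN b a b Hb Ha Hb).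
  rewrite (Rmult_comm a (N a b)), (Rmult_comm b (N a b)).
  exact (hK (N a b) a b (N_pos a b Ha Hb) Ha Hb).
Qed.

End Composite.

Lemma stabilized_Gm_iff_product (K N : R -> R -> R) :
  is_homogeneous K -> is_homogeneous N ->
  (forall a b, 0 < a -> 0 < b -> 0 < N a b) ->
  stabilized Gm K N <-> (forall a b, 0 < a -> 0 < b -> N a b * K a b = a * b).
Proof.
  intros hK hN N_pos; split.
  - intros st a b Ha Hb.
    pose proof (st (a * a) (b * b) ltac:(nra) ltac:(nra)) as E.
    rewrite Gm_squares in E by lra.
    rewrite composite_at_squares in E by assumption.
    lra.
  - intros prod s t Hs Ht.
    destruct (sqrt_pos_square s Hs) as [Ha Es].
    destruct (sqrt_pos_square t Ht) as [Hb Et].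
    rewrite Es, Et, Gm_squares by lra.
    rewrite composite_at_squares by assumption.
    now rewrite prod.
Qed.

Theorem mainTheorem11 (K N : R -> R -> R) :
  is_mean K -> is_homogeneous K ->
  is_mean N -> is_homogeneous N ->
  stabilized Gm K N ->
  (forall s t, 0 < s -> 0 < t -> Gm s t = N (sqrt s) (sqrt t) * K (sqrt s) (sqrt t)) /\
  stabilized Gm N K /\
  (forall s t, 0 < s -> 0 < t ->
     N s t * K s t = s * t /\ Gm (N s t) (K s t) = Gm s t).
Proof.
  intros mK hK mN hN st.
  assert (prod : forall a b, 0 < a -> 0 < b -> N a b * K a b = a * b)
    by exact (proj1 (stabilized_Gm_iff_product K N hK hN (mean_pos N mN)) st).
  split; [|split].
  - intros s t Hs Ht.
    rewrite prod by (apply sqrt_lt_R0; lra).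
    unfold Gm; rewrite sqrt_mult; lra.
  - apply (stabilized_Gm_iff_product N K hN hK (mean_pos K mK)).
    intros a b Ha Hb; rewrite Rmult_comm; now apply prod.
  - intros s t Hs Ht; split; [now apply prod|].
    unfold Gm; now rewrite prod.
Qed.
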